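(* For each $n\ge1$: for all integers $k,l\ge 0$, $\phi_n(k)\phi_n(l)=\phi_n(2kl+k+l)$; and for all integers $k,l\ge1$, $\phi^*_n(k)\phi^*_n(l)=\phi^*_n(2kl)$ and $\phi^+_n(k)\phi^+_n(l)=\phi^+_n(kl)$, where products are taken in the group algebra $\mathbb{Q}[S_n]$.
   Context: For $\pi\in S_n$, $\Omega_\pi(m),\Omega^*_\pi(m),\Omega^+_\pi(m)$ are defined as follows. Integers are written with $\bar i=-i$, ordered $0<_{\mathbb Z}\bar1<_{\mathbb Z}1<_{\mathbb Z}\bar2<_{\mathbb Z}2<\cdots$, $|\bar j|=j$; $a\prec_+b$ means $a<_{\mathbb Z}b$ or $a=b\in\{0,1,\ldots\}$; $a\prec_-b$ means $a<_{\mathbb Z}b$ or $a=b\in\{\bar1,\bar2,\ldots\}$. A $\pi$-partition is $f:[n]\to\mathbb Z$ with, for $1\le i<n$, $f(\pi(i))\prec_+f(\pi(i+1))$ if $\pi(i)<\pi(i+1)$ and $f(\pi(i))\prec_-f(\pi(i+1))$ if $\pi(i)>\pi(i+1)$. $\Omega_\pi(m)$ counts $\pi$-partitions with all $|f(i)|\le m$; $\Omega^*_\pi(m)$ those also never $0$; $\Omega^+_\pi(m)$ those with values in $\{1,\ldots,m\}$. Set $x_m(\pi)=\Omega_\pi(m)/(2m+1)^n$ (for $m\ge0$), $x^*_m(\pi)=\Omega^*_\pi(m)/(2m)^n$, $x^+_m(\pi)=\Omega^+_\pi(m)/m^n$ (for $m\ge1$); these are the probabilities of obtaining $\pi$ from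 an $m$-shelf shuffler in lazy, standard and strict mode respectively. Define $\phi_n(m)=\sum_{\pi\in S_n}x_m(\pi)\pi$, $\phi^*_n(m)=\sum_{\pi}x^*_m(\pi)\pi$, $\phi^+_n(m)=\sum_\pi x^+_m(\pi)\pi$, with multiplication in $\mathbb Q[S_n]$ induced by composition of permutations. *)

From mathcomp Require Import all_boot all_order all_algebra all_fingroup.
Set Implicit Arguments. Unset Strict Implicit. Unset Printing Implicit Defensive.
Import Order.TTheory GRing.Theory Num.Theory.
Local Open Scope ring_scope.

(* Positions [n] = {1..n} are encoded as 'I_n = {0..n-1} (order preserved). *)

(* The order 0 <_Z -1 <_Z 1 <_Z -2 <_Z 2 <_Z ... via a rank into nat. *)
Definition zrank (a : int) : nat :=
  if (0 <= a) then (2 * `|a|)%N else (2 * `|a| - 1)%N.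
Definition ltZ (a b : int) : bool := (zrank a < zrank b)%N.
Definition precp (a b : int) : bool := ltZ a b || ((a == b) && (0 <= a)).
Definition precm (a b : int) : bool := ltZ a b || ((a == b) && (a < 0)).

Definition is_pipart (n : nat) (p : 'S_n) (f : 'I_n -> int) : bool :=
  [forall i : 'I_n, forall j : 'I_n, (nat_of_ord j == (nat_of_ord i).+1) ==>
     (if (p i < p j)%N then precp (f (p i)) (f (p j))
      else precm (f (p i)) (f (p j)))].

(* 'I_(2m+1) enumerates the integers in [-m, m] *)
Definition decode (m : nat) (j : 'I_(2 * m + 1)) : int := (nat_of_ord j)%:Z - m%:Z.

Definition Omega (n m : nat) (p : 'S_n) : nat :=
  #|[set g : {ffun 'I_n -> 'I_(2 * m + 1)} | is_pipart p (fun i => decode (g i))]|.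
Definition Omega_star (n m : nat) (p : 'S_n) : nat :=
  #|[set g : {ffun 'I_n -> 'I_(2 * m + 1)} |
      is_pipart p (fun i => decode (g i)) && [forall i, decode (g i) != 0]]|.
Definition Omega_plus (n m : nat) (p : 'S_n) : nat :=
  #|[set g : {ffun 'I_n -> 'I_(2 * m + 1)} |
      is_pipart p (fun i => decode (g i)) && [forall i, 0 < decode (g i)]]|.

Definition x_lazy (n m : nat) (p : 'S_n) : rat :=
  (Omega m p)%:R / ((2 * m + 1) ^ n)%N%:R.
Definition x_std (n m : nat) (p : 'S_n) : rat :=
  (Omega_star m p)%:R / ((2 * m) ^ n)%N%:R.
Definition x_strict (n m : nat) (p : 'S_n) : rat :=
  (Omega_plus m p)%:R / (m ^ n)%N%:R.

(* The group algebra Q[S_n]: coefficient functions S_n -> Q. *)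
Definition QS (n : nat) := {ffun 'S_n -> rat}.

(* composition of permutations: (comp p r) i = p (r i).
   (In MathComp, (r * p)%g i = p (r i).) *)
Definition comp (n : nat) (p r : 'S_n) : 'S_n := (r * p)%g.

Definition gmul (n : nat) (a b : QS n) : QS n :=
  [ffun s => \sum_(p : 'S_n) \sum_(r : 'S_n | comp p r == s) a p * b r].

Definition phi (n m : nat) : QS n := [ffun p => x_lazy m p].
Definition phi_star (n m : nat) : QS n := [ffun p => x_std m p].
Definition phi_plus (n m : nat) : QS n := [ffun p => x_strict m p].

From mathcomp Require Import all_boot all_order all_algebra all_fingroup zify.
Set Implicit Arguments. Unset Strict Implicit. Unset Printing Implicit Defensive.
Import Order.TTheory GRing.Theory Num.Theory.

(* A pi-partition is a word whose standardization is pi.  Give every letter of a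
   totally ordered alphabet a sign and sort the positions of a word by letter,
   breaking ties left to right between equal nonnegative letters and right to
   left between equal negative ones; the relations <_+ and <_- say exactly that
   f o pi is sorted in this sense, the integers being ordered by their Z-rank
   0, -1, 1, -2, 2, ...

   Let u and v be words over alphabets of sizes A and B.  Read v along the
   standardization of u and pair it with u, letter by letter.  Order the pairs
   (b, a) lexicographically, reversing the order of the a's inside the block of
   a negative b, and sign (b, a) by the product of the signs.  Then the
   standardization of the paired word is std u o std v.  The pairing is a
   bijection, so the number of words over the product alphabet that
   standardize to s is the convolution of the two counts, that is, the product
   in Q[S_n].  The alphabets [-k, k], [-k, k] minus 0 and [1, k] of the three
   modes are closed under this product up to order-isomorphism, with sizes
   (2k+1)(2l+1), 2k 2l and kl. *)

Definition orient (k : nat) (s : bool) (i : nat) : nat := if s then i else k.-1 - i.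

Definition slex (k : nat) (s : bool) (c i : nat) : nat := c * k + orient k s i.

Lemma orient_lt k s i : i < k -> orient k s i < k.
Proof. by case: s => /=; lia. Qed.

Lemma ltn_orient k s i j : i < k -> j < k ->
  (orient k s i < orient k s j) = (if s then i < j else j < i).
Proof. by case: s => //= *; apply/idP/idP; lia. Qed.

Lemma eqn_orient k s i j : i < k -> j < k -> (orient k s i == orient k s j) = (i == j).
Proof. by case: s => //= *; apply/eqP/eqP; lia. Qed.

Lemma ltn_lex_mul k c d i j : c < d -> i < k -> c * k + i < d * k + j.
Proof.
move=> ltcd ltik; apply: leq_trans (leq_addr j _).
by apply: leq_trans (leq_mul ltcd (leqnn k)); rewrite mulSnr ltn_add2l.
Qed.

Lemma ltn_slex k s t c d i j : i < k -> j < k ->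
  (slex k s c i < slex k t d j) = (c < d) || (c == d) && (orient k s i < orient k t j).
Proof.
move=> /(orient_lt s) ltik /(orient_lt t) ltjk; rewrite /slex.
have [ltcd|ltdc|->] /= := ltngtP c d; last by rewrite ltn_add2l.
  exact: ltn_lex_mul.
by apply/negbTE; rewrite -leqNgt ltnW // ltn_lex_mul.
Qed.

Lemma eqn_slex k s t c d i j : i < k -> j < k ->
  (slex k s c i == slex k t d j) = (c == d) && (orient k s i == orient k t j).
Proof.
move=> /(orient_lt s) ltik /(orient_lt t) ltjk; rewrite /slex.
have [ltcd|ltdc|->] /= := ltngtP c d; last by rewrite eqn_add2l.
  by rewrite ltn_eqF // ltn_lex_mul.
by rewrite gtn_eqF // ltn_lex_mul.
Qed.

Lemma ltn_slex_sg k (sg : nat -> bool) c d i j : i < k -> j < k ->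
  (slex k (sg c) c i < slex k (sg d) d j) =
  (c < d) || (c == d) && (if sg c then i < j else j < i).
Proof. by move=> ltik ltjk; rewrite ltn_slex //; case: eqP => //= <-; rewrite ltn_orient. Qed.

Lemma eqn_slex_sg k (sg : nat -> bool) c d i j : i < k -> j < k ->
  (slex k (sg c) c i == slex k (sg d) d j) = (c == d) && (i == j).
Proof. by move=> ltik ltjk; rewrite eqn_slex //; case: eqP => //= <-; rewrite eqn_orient. Qed.

Lemma slex_ltn_mul k s c i C : c < C -> i < k -> slex k s c i < C * k.
Proof. by move=> ltcC /(orient_lt s) ltik; rewrite -[C * k]addn0 ltn_lex_mul. Qed.

Lemma card_ltn_ord n (j : 'I_n) : #|[set i : 'I_n | i < j]| = j.
Proof. by rewrite -sum1dep_card (big_ord_narrow (ltnW (ltn_ord j))) sum1_card card_ord. Qed.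

Section SortPerm.
Variables (n : nat) (key : 'I_n -> nat).
Hypothesis key_inj : injective key.

Definition key_rank (x : 'I_n) : nat := #|[set y | key y < key x]|.

Lemma key_rank_lt x : key_rank x < n.
Proof.
have /subset_leq_card : [set y | key y < key x] \subset [set~ x].
  by apply/subsetP => y; rewrite !inE; apply: contraTneq => ->; rewrite ltnn.
by rewrite cardsC1 card_ord /key_rank; have := ltn_ord x; lia.
Qed.

Lemma ltn_key_rank x y : (key_rank x < key_rank y) = (key x < key y).
Proof.
have rank_mono u v : key u < key v -> key_rank u < key_rank v.
  move=> ltuv; apply: proper_card; apply/properP; split.
    by apply/subsetP => z; rewrite !inE => /ltn_trans; apply.
  by exists u; rewrite !inE ?ltnn.
have [/rank_mono // | /rank_mono/ltnW/leq_gtF // | /key_inj->] := ltngtP (key x) (key y).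
exact: ltnn.
Qed.

Definition key_rank_ord x : 'I_n := Ordinal (key_rank_lt x).

Lemma key_rank_ord_inj : injective key_rank_ord.
Proof.
move=> x y /(congr1 val) /= e; apply: key_inj.
by have := ltn_key_rank x y; have := ltn_key_rank y x; rewrite e ltnn; case: ltngtP.
Qed.

Definition rank_perm : 'S_n := perm key_rank_ord_inj.

Definition sort_perm : 'S_n := rank_perm^-1.

Lemma ltn_rank_perm x y : (rank_perm x < rank_perm y) = (key x < key y).
Proof. by rewrite !permE /= ltn_key_rank. Qed.

Lemma ltn_key_sort_perm i j : (key (sort_perm i) < key (sort_perm j)) = (i < j).
Proof. by rewrite -ltn_rank_perm !permKV. Qed.

Lemma sort_perm_unique (p : 'S_n) :
  (forall i j, (key (p i) < key (p j)) = (i < j)) -> p = sort_perm.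
Proof.
move=> p_sorted; apply/permP => j; apply: (@perm_inj _ rank_perm).
rewrite permKV permE; apply: val_inj => /=.
rewrite /key_rank -(card_preimset _ (@perm_inj _ p)) -card_ltn_ord.
by apply: eq_card => i; rewrite !inE p_sorted.
Qed.

End SortPerm.

Lemma mono_ltn_ord n (f : 'I_n -> nat) :
  (forall i j : 'I_n, nat_of_ord j = i.+1 -> f i < f j) -> {mono f : i j / i < j}.
Proof.
move=> f_step.
have f_homo (i j : 'I_n) : i < j -> f i < f j.
  pose F k := if insub k is Some o then f o else 0.
  have FE (o : 'I_n) : F o = f o by rewrite /F valK.
  rewrite -(FE i) -(FE j).
  apply: (@homo_ltn_in _ [pred k | k < n] F (fun a b => a < b)); rewrite ?inE //.
  - exact: ltn_trans.
  - by move=> a b _; rewrite !inE => ltbn k /andP[_ /ltn_trans]; apply.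
  - move=> k ltkn ltk1n.
    by have := f_step (Ordinal ltkn) (Ordinal ltk1n) erefl; rewrite -!FE.
move=> i j; case: (ltngtP i j) => [/f_homo-> // | /f_homo/ltnW/leq_gtF // | /val_inj->].
exact: ltnn.
Qed.

Section Standardization.
Variables (n N : nat) (sg : nat -> bool).

Definition skey (w : 'I_n -> 'I_N) (i : 'I_n) : nat := slex n (sg (w i)) (w i) i.

Lemma skey_inj (w : 'I_n -> 'I_N) : injective (skey w).
Proof. by move=> i j /eqP; rewrite eqn_slex_sg // => /andP[_ /eqP/val_inj]. Qed.

Definition std (w : 'I_n -> 'I_N) : 'S_n := sort_perm (@skey_inj w).

Lemma ltn_skey_std (w : 'I_n -> 'I_N) (i j : 'I_n) :
  (skey w (std w i) < skey w (std w j)) = (i < j).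
Proof. exact: (ltn_key_sort_perm (@skey_inj w)). Qed.

Lemma std_unique (w : 'I_n -> 'I_N) (p : 'S_n) :
  (forall i j, (skey w (p i) < skey w (p j)) = (i < j)) -> p = std w.
Proof. exact: (sort_perm_unique (@skey_inj w)). Qed.

(* [sprec true] and [sprec false] play the roles of <_+ and <_- : equal letters
   may follow each other along pi at an ascent iff their sign is true, at a
   descent iff it is false. *)
Definition sprec (up : bool) (x y : nat) : bool := (x < y) || (x == y) && (sg x == up).

Definition is_spart (p : 'S_n) (w : 'I_n -> 'I_N) : bool :=
  [forall i : 'I_n, forall j : 'I_n, (nat_of_ord j == (nat_of_ord i).+1) ==>
     sprec (p i < p j) (w (p i)) (w (p j))].

Lemma sprec_skey (w : 'I_n -> 'I_N) (x y : 'I_n) :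
  x != y -> sprec (x < y) (w x) (w y) = (skey w x < skey w y).
Proof.
move=> neq_xy; rewrite /skey ltn_slex_sg // /sprec.
case: eqP => //= ->; congr (_ || _).
by have : nat_of_ord x != y by []; case: (sg _); case: ltngtP.
Qed.

Lemma is_spartE (p : 'S_n) (w : 'I_n -> 'I_N) : is_spart p w = (std w == p).
Proof.
have step_skey (i j : 'I_n) : nat_of_ord j = i.+1 ->
    sprec (p i < p j) (w (p i)) (w (p j)) = (skey w (p i) < skey w (p j)).
  move=> ji; apply: sprec_skey; rewrite (inj_eq perm_inj).
  by apply/eqP => eij; move: ji; rewrite eij; lia.
apply/forallP/eqP => [p_spart | std_p i].
- apply/esym/std_unique; apply: (mono_ltn_ord (f := fun k => skey w (p k))) => i j ji.
  by rewrite -step_skey //; move/forallP/(_ j)/implyP: (p_spart i); apply; apply/eqP.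
- apply/forallP => j; apply/implyP => /eqP ji.
  by rewrite step_skey // -std_p ltn_skey_std ji.
Qed.

Definition std_count (p : 'S_n) : nat := #|[set w : {ffun 'I_n -> 'I_N} | std w == p]|.

End Standardization.

Section ProductAlphabet.
Variables (n A B : nat) (sgA sgB sgC : nat -> bool).
Hypothesis sgC_slex : forall b a, a < A -> sgC (slex A (sgB b) b a) = (sgB b == sgA a).

Local Notation word K := {ffun 'I_n -> 'I_K}.

Definition pair_letter (b : 'I_B) (a : 'I_A) : 'I_(B * A) :=
  Ordinal (slex_ltn_mul (sgB b) (ltn_ord b) (ltn_ord a)).

Lemma pair_letter_inj b a b' a' : pair_letter b a = pair_letter b' a' -> b = b' /\ a = a'.
Proof.
by move/(congr1 val)/eqP; rewrite /= eqn_slex_sg // => /andP[/eqP/val_inj-> /eqP/val_inj->].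
Qed.

(* If positions X, Y of u, holding letters a1, a2, have ranks x, y under u, then
   the paired letters compare at X, Y as the letters b1, b2 of v do at x, y. *)
Lemma ltn_slex_pair (X Y x y : 'I_n) b1 b2 a1 a2 :
  a1 < A -> a2 < A -> X != Y -> x != y ->
  (x < y) = (slex n (sgA a1) a1 X < slex n (sgA a2) a2 Y) ->
  (slex n (sgC (slex A (sgB b1) b1 a1)) (slex A (sgB b1) b1 a1) X <
   slex n (sgC (slex A (sgB b2) b2 a2)) (slex A (sgB b2) b2 a2) Y) =
  (slex n (sgB b1) b1 x < slex n (sgB b2) b2 y).
Proof.
move=> lta1 lta2 neqXY neqxy.
rewrite !ltn_slex_sg ?ltn_ord // eqn_slex_sg // !sgC_slex //.
case: (ltngtP b1 b2) => //= _.
have : nat_of_ord x != y by []; have : nat_of_ord X != Y by [].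
case: (ltngtP a1 a2) => _; case: (sgB _); case: (sgA _);
  case: (ltngtP x y); case: (ltngtP X Y) => //.
Qed.

Definition pair_word (uv : word A * word B) : word (B * A) :=
  [ffun X => pair_letter (uv.2 ((std sgA uv.1)^-1%g X)) (uv.1 X)].

Lemma std_pair_word uv : std sgC (pair_word uv) = (std sgB uv.2 * std sgA uv.1)%g.
Proof.
case: uv => u v; apply/esym/std_unique => i j /=; rewrite !permM /skey !ffunE /= !permK.
have [<-|neq_ij] := eqVneq i j; first by rewrite !ltnn.
have neq_std (q : 'S_n) k l : k != l -> q k != q l by rewrite (inj_eq perm_inj).
by rewrite (ltn_slex_pair (x := std sgB v i) (y := std sgB v j))
  ?ltn_ord ?neq_std ?ltn_skey_std.
Qed.

Lemma pair_word_inj : injective pair_word.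
Proof.
move=> [u v] [u' v'] /ffunP eq_uv.
have eq_u : u = u'.
  by apply/ffunP => X; have := eq_uv X; rewrite !ffunE => /pair_letter_inj[].
rewrite -eq_u in eq_uv *; congr pair; apply/ffunP => x.
by have := eq_uv (std sgA u x); rewrite !ffunE /= permK => /pair_letter_inj[].
Qed.

Lemma pair_word_bij : bijective pair_word.
Proof.
by apply: (inj_card_bij pair_word_inj); rewrite card_prod !card_ffun !card_ord expnMn mulnC.
Qed.

Lemma std_count_mul (s : 'S_n) :
  \sum_(p : 'S_n) \sum_(r : 'S_n | (r * p)%g == s) std_count A sgA p * std_count B sgB r =
  std_count (B * A) sgC s.
Proof.
rewrite /std_count -(on_card_preimset (onW_bij _ pair_word_bij)).
have -> : pair_word @^-1: [set w : word (B * A) | std sgC w == s] =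
          [set uv : word A * word B | (std sgB uv.2 * std sgA uv.1)%g == s].
  by apply/setP => uv; rewrite !inE std_pair_word.
rewrite -sum1dep_card pair_big_dep /=.
rewrite (partition_big (fun uv : word A * word B => (std sgA uv.1, std sgB uv.2))
                       (fun pr => (pr.2 * pr.1)%g == s)) //=.
apply: eq_bigr => [[p r]] /= eq_s.
rewrite sum1dep_card -cardsX; apply: eq_card => [[u v]]; rewrite !inE /= xpair_eqE.
apply/idP/idP => [/andP[/eqP eq_p /eqP eq_r] | /and3P[_ -> ->] //].
by rewrite eq_p eq_r eq_s !eqxx.
Qed.

End ProductAlphabet.

Definition zunrank (k : nat) : int := if odd k then (- Posz k.+1./2)%R else Posz k./2.

Lemma zunrankK : cancel zunrank zrank.
Proof. by move=> k; rewrite /zunrank; case: ifP => odd_k; rewrite /zrank; case: leP; lia. Qed.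

Lemma zrankK : cancel zrank zunrank.
Proof. by move=> a; rewrite /zrank; case: leP => sgn_a; rewrite /zunrank; case: ifP; lia. Qed.

Lemma odd_zrank a : odd (zrank a) = (a < 0)%R.
Proof. by rewrite /zrank; case: leP => sgn_a; lia. Qed.

Lemma prec_zrank up a b :
  (if up then precp a b else precm a b) = sprec (fun k => ~~ odd k) up (zrank a) (zrank b).
Proof.
rewrite /precp /precm /ltZ /sprec (inj_eq (can_inj zrankK)) odd_zrank.
by case: up; case: ltP.
Qed.

Lemma sprec_mono (f : nat -> nat) sg up x y : {mono f : u v / u <= v} ->
  sprec sg up (f x) (f y) = sprec (sg \o f) up x y.
Proof. by move=> f_mono; rewrite /sprec (leqW_mono f_mono) (inj_eq (incn_inj f_mono)). Qed.

Lemma decode_inj m : injective (@decode m).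
Proof. by move=> x y; rewrite /decode => eq_xy; apply: ord_inj; lia. Qed.

(* The values allowed by P, listed in the Z-order, are the integers in [-m, m]
   of Z-rank g z, z < N. *)
Section ValueEmbedding.
Variables (m N : nat) (g : nat -> nat) (P : pred 'I_(2 * m + 1)).
Hypothesis g_mono : {mono g : x y / x <= y}.
Hypothesis g_le : forall z : 'I_N, g z <= 2 * m.
Hypothesis P_range : forall x, P x = [exists z : 'I_N, g z == zrank (decode x)].

Let sg (z : nat) : bool := ~~ odd (g z).

Lemma embed_subproof (z : 'I_N) : `|(zunrank (g z) + Posz m)%R|%N < 2 * m + 1.
Proof. by have := g_le z; rewrite /zunrank; case: ifP; lia. Qed.

Definition embed (z : 'I_N) : 'I_(2 * m + 1) := Ordinal (embed_subproof z).

Lemma decode_embed z : decode (embed z) = zunrank (g z).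
Proof. by have := g_le z; rewrite /decode /embed /= /zunrank; case: ifP; lia. Qed.

Lemma embed_inj : injective embed.
Proof.
move=> z z' /(congr1 (@decode m)); rewrite !decode_embed => /(can_inj zunrankK).
by move/(incn_inj g_mono)/ord_inj.
Qed.

Lemma P_codom_embed x : P x = (x \in codom embed).
Proof.
rewrite P_range; apply/existsP/codomP => [[z /eqP g_z] | [z ->]].
  by exists z; apply: decode_inj; rewrite decode_embed g_z zrankK.
by exists z; rewrite decode_embed zunrankK.
Qed.

Lemma is_pipart_embed n (p : 'S_n) (f : 'I_n -> 'I_(2 * m + 1)) (w : 'I_n -> 'I_N) :
  (forall i, f i = embed (w i)) -> is_pipart p (fun i => decode (f i)) = is_spart sg p w.
Proof.
move=> f_w; apply: eq_forallb => i; apply: eq_forallb => j.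
by rewrite !f_w !decode_embed prec_zrank !zunrankK sprec_mono.
Qed.

Lemma card_pipart_embed n (p : 'S_n) :
  #|[set f : {ffun 'I_n -> 'I_(2 * m + 1)} |
      is_pipart p (fun i => decode (f i)) && [forall i, P (f i)]]| = std_count N sg p.
Proof.
pose lift (w : {ffun 'I_n -> 'I_N}) := [ffun i => embed (w i)].
have lift_inj : injective lift.
  move=> w w' /ffunP eq_ww'; apply/ffunP => i; apply: embed_inj.
  by have := eq_ww' i; rewrite !ffunE.
rewrite /std_count -(card_imset _ lift_inj); apply: eq_card => f; rewrite inE.
apply/andP/imsetP => [[pipart_f /forallP P_f] | [w std_w ->]].
- have f_codom i : f i \in codom embed by rewrite -P_codom_embed.
  have f_w i : f i = embed ([ffun i => iinv (f_codom i)] i) by rewrite ffunE f_iinv.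
  exists [ffun i => iinv (f_codom i)]; last by apply/ffunP => i; rewrite ffunE f_w.
  by rewrite inE -is_spartE -(is_pipart_embed _ f_w).
- move: std_w; rewrite inE -is_spartE => spart_w.
  split; last by apply/forallP => i; rewrite ffunE P_codom_embed codom_f.
  by rewrite (@is_pipart_embed _ p _ w) // => i; rewrite ffunE.
Qed.

End ValueEmbedding.

Lemma zrank_decode_lt m (x : 'I_(2 * m + 1)) : zrank (decode x) < 2 * m + 1.
Proof. by have := ltn_ord x; rewrite /zrank /decode; case: leP; lia. Qed.

Lemma Omega_std_count n m (p : 'S_n) :
  Omega m p = std_count (2 * m + 1) (fun z => ~~ odd z) p.
Proof.
rewrite -(@card_pipart_embed m _ id predT) //.
- by apply: eq_card => f; rewrite !inE andb_idr // => _; apply/forallP.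
- by move=> z; have := ltn_ord z; lia.
- by move=> x; apply/esym/existsP; exists (Ordinal (zrank_decode_lt x)).
Qed.

Lemma Omega_star_std_count n m (p : 'S_n) :
  Omega_star m p = std_count (2 * m) (fun z => ~~ odd z.+1) p.
Proof.
rewrite -(@card_pipart_embed m _ succn (fun x => decode x != 0%R)) //.
move=> x; have lt_x := zrank_decode_lt x.
apply/idP/existsP => [nz_x | [z /eqP]].
  have lt_z : (zrank (decode x)).-1 < 2 * m.
    by move: nz_x lt_x; rewrite /zrank; case: leP; lia.
  by exists (Ordinal lt_z); move: nz_x lt_x; rewrite /= /zrank; case: leP; lia.
by move: lt_x; rewrite /zrank; case: leP; lia.
Qed.

Lemma Omega_plus_std_count n m (p : 'S_n) :
  Omega_plus m p = std_count m (fun z => ~~ odd (2 * z.+1)) p.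
Proof.
rewrite -(@card_pipart_embed m _ (fun z => 2 * z.+1) (fun x => 0 < decode x)%R) //.
- by move=> x y; rewrite leq_pmul2l.
- by move=> z; have := ltn_ord z; lia.
move=> x; have lt_x := ltn_ord x; have dec_x : decode x = (Posz x - Posz m)%R by [].
rewrite /zrank; case: (leP 0%R (decode x)) => sgn_x; apply/idP/existsP => [pos_x | [z /eqP]];
  try lia.
have lt_z : `|decode x|.-1 < m by lia.
by exists (Ordinal lt_z); rewrite /=; lia.
Qed.

Lemma slex_sign_lazy k b a : a < 2 * k + 1 ->
  ~~ odd (slex (2 * k + 1) (~~ odd b) b a) = (~~ odd b == ~~ odd a).
Proof. by rewrite /slex /orient oddD oddM; case: (odd b) => /=; lia. Qed.

Lemma slex_sign_std k b a : a < 2 * k ->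
  ~~ odd (slex (2 * k) (~~ odd b.+1) b a).+1 = (~~ odd b.+1 == ~~ odd a.+1).
Proof. by rewrite /slex /orient /= oddD oddM; case: (odd b) => /=; lia. Qed.

Lemma slex_sign_strict k b a :
  ~~ odd (2 * (slex k (~~ odd (2 * b.+1)) b a).+1) = (~~ odd (2 * b.+1) == ~~ odd (2 * a.+1)).
Proof. by rewrite !oddM. Qed.

Local Open Scope ring_scope.

Lemma gmul_std_count n A B (sgA sgB sgC : nat -> bool) (a b : QS n) :
  (forall b' a', (a' < A)%N -> sgC (slex A (sgB b') b' a') = (sgB b' == sgA a')) ->
  (forall p, a p = (std_count A sgA p)%:R / (A ^ n)%:R) ->
  (forall r, b r = (std_count B sgB r)%:R / (B ^ n)%:R) ->
  gmul a b = [ffun s => (std_count (B * A) sgC s)%:R / ((B * A) ^ n)%:R].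
Proof.
move=> sgC_slex aE bE; apply/ffunP => s; rewrite !ffunE -(std_count_mul B sgC_slex).
rewrite natr_sum mulr_suml; apply: eq_bigr => p _.
rewrite natr_sum mulr_suml; apply: eq_bigr => r _.
by rewrite aE bE mulf_div -!natrM expnMn [(A ^ n * _)%N]mulnC.
Qed.

Lemma phiE n m p :
  phi n m p = (std_count (2 * m + 1) (fun z => ~~ odd z) p)%:R / ((2 * m + 1) ^ n)%:R.
Proof. by rewrite ffunE /x_lazy Omega_std_count. Qed.

Lemma phi_starE n m p :
  phi_star n m p = (std_count (2 * m) (fun z => ~~ odd z.+1) p)%:R / ((2 * m) ^ n)%:R.
Proof. by rewrite ffunE /x_std Omega_star_std_count. Qed.

Lemma phi_plusE n m p :
  phi_plus n m p = (std_count m (fun z => ~~ odd (2 * z.+1)) p)%:R / (m ^ n)%:R.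
Proof. by rewrite ffunE /x_strict Omega_plus_std_count. Qed.

Local Close Scope ring_scope.

Theorem corollary3p7 (n : nat) : (1 <= n)%N ->
  (forall k l : nat,
      gmul (phi n k) (phi n l) = phi n (2 * k * l + k + l)) /\
  (forall k l : nat, (1 <= k)%N -> (1 <= l)%N ->
      gmul (phi_star n k) (phi_star n l) = phi_star n (2 * k * l)) /\
  (forall k l : nat, (1 <= k)%N -> (1 <= l)%N ->
      gmul (phi_plus n k) (phi_plus n l) = phi_plus n (k * l)).
Proof.
move=> _; split; [|split] => k l *.
- rewrite (gmul_std_count (sgC := fun z => ~~ odd z)
    (@slex_sign_lazy k) (phiE k) (phiE l)).
  have -> : ((2 * l + 1) * (2 * k + 1) = 2 * (2 * k * l + k + l) + 1)%N by nia.
  by apply/ffunP => s; rewrite ffunE phiE.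
- rewrite (gmul_std_count (sgC := fun z => ~~ odd z.+1)
    (@slex_sign_std k) (phi_starE k) (phi_starE l)).
  have -> : (2 * l * (2 * k) = 2 * (2 * k * l))%N by nia.
  by apply/ffunP => s; rewrite ffunE phi_starE.
- rewrite (gmul_std_count (sgC := fun z => ~~ odd (2 * z.+1))
    (fun b a _ => slex_sign_strict k b a) (phi_plusE k) (phi_plusE l)).
  by apply/ffunP => s; rewrite ffunE phi_plusE mulnC.
Qed.
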